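(* Let $K\subseteq L$ be convex bodies in $\mathbb{R}^d$ with the origin in the interior of $K$. Let $F$ be an $s$-dimensional linear subspace, $(v_1,p_1),\dots,(v_m,p_m)$ contact pairs of $K$ and $L$, and $\alpha_1,\dots,\alpha_m$ positive weights with \[ P_F\Big(\sum_i\alpha_ip_i\otimes v_i\Big)P_F=P_F,\quad\sum_i\alpha_ip_i=0,\quad \operatorname{tr}\Big(\sum_i\alpha_ip_i\otimes v_i\Big)=\sum_i\alpha_i=d. \] Assume additionally that $P_FK\subset L\cap F$. Then there exist a point $z$ in the relative interior of $L\cap F$, contact pairs $(v_1',p_1'),\dots,(v_m',p_m')$ of $K-z$ and $L-z$, and weights $c_1,\dots,c_m>0$ such that \[ \sum_i c_ip_i'\otimes v_i'=\sum_i\alpha_ip_i\otimes v_i\quad\text{and}\quad \sum_ic_iP_Fv_i'=\sum_ic_ip_i'=0. \]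
   Context: A convex body is a compact convex set with nonempty interior. $P_F$ is orthogonal projection onto $F$. The polar of $S$ is $S^\circ=\{p:\langle x,p\rangle\le1\ \forall x\in S\}$. For convex bodies $K\subseteq L$, a contact pair of $K$ and $L$ is a pair $(v,p)$ with $v\in\partial K\cap\partial L$, $p\in\partial K^\circ\cap\partial L^\circ$, $\langle p,v\rangle=1$. For vectors $p,v$, $p\otimes v$ is the operator $x\mapsto\langle v,x\rangle p$. *)

(* Vectors of R^d are row
   vectors 'rV[R]_d; operators act on the right: x |-> x *m A. *)
From HB Require Import structures.
From mathcomp Require Import all_boot all_order all_algebra.
From mathcomp Require Import all_classical all_reals all_analysis.
Import numFieldNormedType.Exports.
Set Implicit Arguments. Unset Strict Implicit. Unset Printing Implicit Defensive.
Import Order.TTheory GRing.Theory Num.Theory.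
Local Open Scope classical_set_scope.
Local Open Scope ring_scope.

Section Defs.
Variables (R : realType) (d : nat).
Notation V := 'rV[R]_d.

Definition dot (x y : V) : R := \sum_(i < d) x 0 i * y 0 i.

Definition convexS (S : set V) : Prop :=
  forall x y (t : R), S x -> S y -> 0 <= t -> t <= 1 -> S ((1 - t) *: x + t *: y).

Definition convex_body (S : set V) : Prop :=
  compact S /\ convexS S /\ (interior S !=set0).

Definition bdry (S : set V) : set V := closure S `\` interior S.

Definition polar (S : set V) : set V := [set p | forall x, S x -> dot x p <= 1].

Definition contact_pair (K L : set V) (v p : V) : Prop :=
  bdry K v /\ bdry L v /\ bdry (polar K) p /\ bdry (polar L) p /\ dot p v = 1.

(* p (x) v : x |-> <v,x> p ; as a matrix acting on row vectors on the right *)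
Definition tens (p v : V) : 'M[R]_d := v^T *m p.

(* linear subspace spanned by the rows of F, as a set *)
Definition subsp (F : 'M[R]_d) : set V := [set x | (x <= F)%MS].

(* orthogonal projection onto the row space of F (as a right-acting matrix) *)
Definition projmx (F : 'M[R]_d) : 'M[R]_d :=
  let B := row_base F in B^T *m invmx (B *m B^T) *m B.

Definition translate (S : set V) (z : V) : set V := [set x - z | x in S].

Definition aff (S : set V) : set V :=
  [set x | exists (n : nat) (xs : 'I_n -> V) (l : 'I_n -> R),
     (forall i, S (xs i)) /\ \sum_(i < n) l i = 1 /\ x = \sum_(i < n) l i *: xs i].

Definition relint (S : set V) : set V :=
  [set z : V | S z /\ \forall y \near z, aff S y -> S y].

End Defs.

From HB Require Import structures.
From mathcomp Require Import all_boot all_order all_algebra.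
From mathcomp Require Import all_classical all_reals all_analysis.
From mathcomp Require Import ring.
Import Order.TTheory GRing.Theory Num.Theory.
Import numFieldNormedType.Exports.

Set Implicit Arguments.
Unset Strict Implicit.
Unset Printing Implicit Defensive.

Local Open Scope classical_set_scope.
Local Open Scope ring_scope.

(* Let w = sum_i alpha_i v_i / (d+1), a convex combination of the contact
   points v_i and of the origin, the latter with weight 1/(d+1).  Then
   w + K/(d+1) is contained in K, which puts z = P_F w in the relative interior
   of L /\ F, and <p_i, z> <= d/(d+1) < 1 because every P_F v_j lies in L.
   Translating by z and taking p_i' = p_i / (1 - <p_i,z>) and
   c_i = alpha_i (1 - <p_i,z>) preserves contact pairs, and sum_i alpha_i p_i = 0
   leaves the operator A = sum_i alpha_i p_i (x) v_i unchanged.  Finally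
   sum_i alpha_i <p_i,z> P_F v_i = z A^T P_F = z (P_F A P_F)^T = z, so
   sum_i c_i P_F v_i' = (d+1) z - d z - z = 0. *)

Section InnerProduct.
Variables (R : realType) (d : nat).
Implicit Types (x y z : 'rV[R]_d) (a : R).

Lemma dotE x y : dot x y = (x *m y^T) 0 0.
Proof. by rewrite /dot mxE; apply: eq_bigr => i _; rewrite mxE. Qed.

Lemma dotC x y : dot x y = dot y x.
Proof. by apply: eq_bigr => i _; rewrite mulrC. Qed.

Lemma dot0l y : dot 0 y = 0.
Proof. by rewrite dotE mul0mx mxE. Qed.

Lemma dotZl a x y : dot (a *: x) y = a * dot x y.
Proof. by rewrite !dotE -scalemxAl mxE. Qed.

Lemma dotZr a x y : dot x (a *: y) = a * dot x y.
Proof. by rewrite dotC dotZl dotC. Qed.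

Lemma dotBl x y z : dot (x - y) z = dot x z - dot y z.
Proof. by rewrite !dotE mulmxBl !mxE. Qed.

Lemma dotBr x y z : dot x (y - z) = dot x y - dot x z.
Proof. by rewrite dotC dotBl ![dot _ x]dotC. Qed.

Lemma dot_suml n (c : 'I_n -> R) (xs : 'I_n -> 'rV[R]_d) y :
  dot (\sum_i c i *: xs i) y = \sum_i c i * dot (xs i) y.
Proof.
rewrite dotE mulmx_suml summxE; apply: eq_bigr => i _.
by rewrite -scalemxAl mxE dotE.
Qed.

Lemma dot_self_eq0 x : dot x x = 0 -> x = 0.
Proof.
move=> /eqP; rewrite psumr_eq0 => [/allP x0|i _]; last by rewrite -expr2 sqr_ge0.
apply/rowP => i; have /x0 := mem_index_enum i.
by rewrite mxE mulf_eq0 orbb => /implyP/(_ isT)/eqP.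
Qed.

Lemma continuous_dotl y : continuous (fun x : 'rV[R]_d => dot x y).
Proof.
apply: (@continuous_big R _ +%R 0 predT (@add_continuous R)) => i _ x.
exact: (@cvgMr_tmp _ _ (nbhs x) _ (fun q : 'rV[R]_d => q 0 i) _ _
         (@coord_continuous R 1 d 0 i x)).
Qed.

End InnerProduct.

Section Boundary.
Variables (R : realType) (d : nat).
Notation V := 'rV[R]_d.
Implicit Types (S T : set V) (x y z p q : V).

Lemma bdry_transport (f : V -> V) (N : set V) S T x :
  {for x, continuous f} -> nbhs x N -> (forall y, N y -> T (f y) <-> S y) ->
  bdry S x -> bdry T (f x).
Proof.
move=> fx Nx ST [clS niS]; split.
  move=> B /fx fB; have [y [Sy [By Ny]]] := clS _ (filterI (fB : nbhs x _) Nx).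
  by exists (f y); split=> //; apply/ST.
move=> Tfx; apply: niS; apply: filterS (filterI (fx _ Tfx : nbhs x _) Nx).
by move=> y [Tfy Ny]; apply/ST.
Qed.

Lemma bdry_translate S z v : bdry S v -> bdry (translate S z) (v - z).
Proof.
apply: (@bdry_transport (fun y => y - z) setT) => [||y _].
- by apply: continuousB; [exact: cvg_id | exact: cst_continuous].
- exact: filterT.
- by split=> [[x Sx /subIr <-]|Sy]; last exists y.
Qed.

Lemma polar_closed S : closed (polar S).
Proof.
have -> : polar S = \bigcap_(x in S) ((fun q => dot q x) @^-1` [set r | r <= 1]).
  by apply/seteqP; split=> q Pq x Sx /=; rewrite dotC; exact: Pq.
apply: closed_bigI => x _; apply: preimage_closed; last exact: closed_le.
by move=> q _; exact: continuous_dotl.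
Qed.

Lemma bdry_polar_sub S : bdry (polar S) `<=` polar S.
Proof. by move=> p [/polar_closed]. Qed.

Lemma polar_translate S z q : dot q z < 1 ->
  polar (translate S z) ((1 - dot q z)^-1 *: q) <-> polar S q.
Proof.
move=> qz; have t_gt0 : 0 < 1 - dot q z by rewrite subr_gt0.
have scaled_le1 x : dot (x - z) ((1 - dot q z)^-1 *: q) <= 1 <-> dot x q <= 1.
  rewrite dotZr dotBl -(ler_pM2l t_gt0) mulrA mulfV ?gt_eqF // mul1r mulr1.
  by rewrite [dot z q]dotC lerD2r.
split=> [Pq x Sx|Pq _ [x Sx <-]]; apply/scaled_le1; last exact: Pq.
by apply: Pq; exists x.
Qed.

Lemma bdry_polar_translate S z p : dot p z < 1 -> bdry (polar S) p ->
  bdry (polar (translate S z)) ((1 - dot p z)^-1 *: p).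
Proof.
move=> pz; have t_neq0 : 1 - dot p z != 0 by rewrite subr_eq0 eq_sym lt_eqF.
apply: (@bdry_transport (fun q => (1 - dot q z)^-1 *: q) [set q | dot q z < 1]).
- apply: continuousZ; last exact: cvg_id.
  apply: continuousV => //.
  by apply: continuousB; [exact: cst_continuous | exact: continuous_dotl].
- have lt1 : nbhs (dot p z) [set r : R | r < 1].
    by apply: open_nbhs_nbhs; split=> //; exact: open_lt.
  exact: continuous_dotl z p _ lt1.
- by move=> q; exact: polar_translate.
Qed.

Lemma contact_pair_translate K L v p z : dot p z < 1 -> contact_pair K L v p ->
  contact_pair (translate K z) (translate L z) (v - z) ((1 - dot p z)^-1 *: p).
Proof.
move=> pz [Kv [Lv [Kp [Lp pv]]]].
do 2 (split; first exact: bdry_translate).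
do 2 (split; first exact: bdry_polar_translate).
by rewrite dotZl dotBr pv mulVf // subr_eq0 eq_sym lt_eqF.
Qed.

End Boundary.

Section LinearAlgebra.
Variables (R : realType) (d : nat).
Notation V := 'rV[R]_d.

Lemma row_free_mulmx_tr_unit r (B : 'M[R]_(r, d)) : row_free B -> B *m B^T \in unitmx.
Proof.
move=> freeB; rewrite -row_free_unit; apply: inj_row_free => x xBBt0.
have : dot (x *m B) (x *m B) = 0.
  by rewrite dotE trmx_mul mulmxA -(mulmxA x) xBBt0 mul0mx mxE.
by move/dot_self_eq0 => xB0; apply: (row_free_inj freeB); rewrite xB0 mul0mx.
Qed.

Lemma projmx_sym (F : 'M[R]_d) : (projmx F)^T = projmx F.
Proof.
rewrite /projmx /=; move: (row_base F) => B.
by rewrite !trmx_mul trmxK trmx_inv trmx_mul trmxK !mulmxA.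
Qed.

Lemma projmx_idem (F : 'M[R]_d) : projmx F *m projmx F = projmx F.
Proof.
rewrite /projmx /=; have := row_free_mulmx_tr_unit (row_base_free F).
move: (row_base F) => B BBt_unit.
by rewrite !mulmxA -(mulmxA _ B B^T) mulmxKV.
Qed.

Lemma projmx_id (F : 'M[R]_d) (y : V) : (y <= F)%MS -> y *m projmx F = y.
Proof.
move=> yF; have /submxP[a ->] : (y <= row_base F)%MS by rewrite eq_row_base.
rewrite /projmx /=.
have := row_free_mulmx_tr_unit (row_base_free F).
move: (row_base F) => B BBt_unit.
by rewrite !mulmxA -(mulmxA a B B^T) mulmxK.
Qed.

Lemma aff_subsp (F : 'M[R]_d) (S : set V) : S `<=` subsp F -> aff S `<=` subsp F.
Proof.
move=> SF _ [n [xs [l [Sxs [_ ->]]]]].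
by apply: summx_sub => i _; apply: scalemx_sub; exact: SF.
Qed.

Lemma tensZl a (p v : V) : tens (a *: p) v = a *: tens p v.
Proof. by rewrite /tens scalemxAr. Qed.

Lemma mulmx_trtens (x p v : V) : x *m (tens p v)^T = dot x p *: v.
Proof.
by rewrite /tens trmx_mul trmxK mulmxA [x *m p^T]mx11_scalar mul_scalar_mx dotE.
Qed.

Lemma sum_tens_translate n (a : 'I_n -> R) (p v : 'I_n -> V) z :
  \sum_i a i *: p i = 0 ->
  \sum_i a i *: tens (p i) (v i - z) = \sum_i a i *: tens (p i) (v i).
Proof.
move=> sum_ap0; have tens_z : \sum_i a i *: tens (p i) z = 0.
  by rewrite /tens (eq_bigr _ (fun i _ => scalemxAr _ _ _)) -mulmx_sumr sum_ap0 mulmx0.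
rewrite (eq_bigr (fun i => a i *: tens (p i) (v i) - a i *: tens (p i) z)).
  by rewrite sumrB tens_z subr0.
by move=> i _; rewrite /tens linearB /= mulmxBl scalerBr.
Qed.

Lemma sum_dot_tens_proj n (a : 'I_n -> R) (p v : 'I_n -> V) (P : 'M[R]_d) z :
  P^T = P -> P *m (\sum_i a i *: tens (p i) (v i)) *m P = P -> z *m P = z ->
  \sum_i (a i * dot (p i) z) *: (v i *m P) = z.
Proof.
move=> Psym PAP zP.
have PAtP : P *m (\sum_i a i *: tens (p i) (v i))^T *m P = P.
  by move: (congr1 trmx PAP); rewrite !trmx_mul Psym mulmxA.
rewrite -{2}zP -{2}PAtP !mulmxA zP linear_sum mulmx_sumr mulmx_suml.
apply: eq_bigr => i _.
by rewrite linearZ /= -scalemxAr mulmx_trtens -!scalemxAl scalerA dotC.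
Qed.

Lemma convexS_comb (S : set V) n (xs : 'I_n -> V) (l : 'I_n -> R) u :
  convexS S -> S u -> (forall i, S (xs i)) -> (forall i, 0 <= l i) ->
  \sum_i l i <= 1 -> S (\sum_i l i *: xs i + (1 - \sum_i l i) *: u).
Proof.
move=> convS; elim: n xs l u => [|n IH] xs l u Su Sxs l_ge0.
  by rewrite !big_ord0 add0r subr0 scale1r.
rewrite !big_ord_recr /=; set lam := \sum_(i < n) _; set a := l ord_max => suml_le1.
have lam_ge0 : 0 <= lam by apply: sumr_ge0 => i _; exact: l_ge0.
have IHn := IH (fun i => xs (widen_ord (leqnSn n) i))
                (fun i => l (widen_ord (leqnSn n) i)).
have [lam1|lam_neq1] := eqVneq lam 1.
  have a0 : a = 0.
    by apply/eqP; rewrite eq_le l_ge0 andbT -(lerD2l lam) addr0 {2}lam1.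
  by rewrite a0 scale0r !addr0; apply: IHn => //; rewrite -/lam lam1.
have lam_lt1 : lam < 1.
  by rewrite lt_neqAle lam_neq1 (le_trans _ suml_le1) // lerDl l_ge0.
have t_gt0 : 0 < 1 - lam by rewrite subr_gt0.
pose t := a / (1 - lam).
have Su' : S ((1 - t) *: u + t *: xs ord_max).
  apply: convS => //; first by rewrite divr_ge0 ?l_ge0 ?ltW.
  by rewrite ler_pdivrMr // mul1r lerBrDl.
have regroup : (1 - lam) *: ((1 - t) *: u + t *: xs ord_max)
               = a *: xs ord_max + (1 - (lam + a)) *: u.
  rewrite [RHS]addrC scalerDr !scalerA /t.
  by congr (_ *: _ + _ *: _); field; exact: lt0r_neq0.
rewrite -addrA -regroup.
exact: IHn _ Su' (fun i => Sxs _) (fun i => l_ge0 _) (ltW lam_lt1).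
Qed.

End LinearAlgebra.

Section Centre.
Variables (R : realType) (d m : nat) (K L : set 'rV[R]_d) (F : 'M[R]_d).
Variables (v p : 'I_m -> 'rV[R]_d) (alpha : 'I_m -> R).
Hypotheses (K_convex : convexS K) (K_closed : closed K) (K0 : interior K 0).
Hypothesis contact : forall i, contact_pair K L (v i) (p i).
Hypothesis alpha_gt0 : forall i, 0 < alpha i.
Hypothesis sum_alpha : \sum_i alpha i = d%:R.
Hypothesis PK_sub : [set x *m projmx F | x in K] `<=` L `&` subsp F.
Hypothesis sum_alpha_p : \sum_i alpha i *: p i = 0.
Hypothesis PAP :
  projmx F *m (\sum_i alpha i *: tens (p i) (v i)) *m projmx F = projmx F.

Let P := projmx F.
Let k : R := d%:R + 1.

Definition barycentre : 'rV[R]_d := \sum_i (alpha i / (d%:R + 1)) *: v i.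
Let z := barycentre *m P.

Let k_gt0 : 0 < k. Proof. by rewrite ltr_wpDl. Qed.

Let sum_alpha_k : \sum_i alpha i / k = d%:R / k.
Proof. by rewrite -mulr_suml sum_alpha. Qed.

Lemma contact_point_mem i : K (v i).
Proof. by apply: K_closed; case: (contact i) => -[]. Qed.

Lemma barycentre_shift_mem u : K u -> K (barycentre + k^-1 *: u).
Proof.
move=> Ku; have suml_le1 : \sum_i alpha i / k <= 1.
  by rewrite sum_alpha_k ler_pdivrMr // mul1r lerDl.
have := convexS_comb K_convex Ku contact_point_mem
  (fun i => divr_ge0 (ltW (alpha_gt0 i)) (ltW k_gt0)) suml_le1.
suff -> : 1 - \sum_i alpha i / k = k^-1 by [].
by rewrite sum_alpha_k /k; field; exact: lt0r_neq0 k_gt0.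
Qed.

Lemma proj_barycentre_mem : (L `&` subsp F) z.
Proof.
apply: PK_sub; exists barycentre => //.
by have := barycentre_shift_mem (nbhs_singleton K0); rewrite scaler0 addr0.
Qed.

Lemma dot_contact_proj_barycentre_lt1 i : dot (p i) z < 1.
Proof.
have pL : polar L (p i) by apply: bdry_polar_sub; case: (contact i) => _ [_ [_ []]].
rewrite dotC /z /barycentre mulmx_suml; under eq_bigr do rewrite -scalemxAl.
rewrite dot_suml (@le_lt_trans _ _ (\sum_j alpha j / k)) //.
  apply: ler_sum => j _; rewrite -[leRHS]mulr1.
  apply: ler_wpM2l; first by rewrite divr_ge0 ?ltW.
  by apply: pL; case: (PK_sub (ex_intro2 _ _ _ (contact_point_mem j) erefl)).
by rewrite sum_alpha_k ltr_pdivrMr // mul1r ltrDl.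
Qed.

Lemma proj_barycentre_relint : relint (L `&` subsp F) z.
Proof.
split; first exact: proj_barycentre_mem.
have Kz : \forall y \near z, K (k *: (y - z)).
  have : {for z, continuous (fun y : 'rV[R]_d => k *: (y - z))}.
    apply: continuousZl_tmp.
    by apply: continuousB; [exact: cvg_id | exact: cst_continuous].
  by apply; rewrite subrr scaler0.
near=> y => affy.
have yF : (y <= F)%MS by apply: aff_subsp affy => x [].
have Ky : K (k *: (y - z)) by near: y.
have := PK_sub (ex_intro2 _ _ _ (barycentre_shift_mem Ky) erefl).
rewrite scalerA mulVf ?lt0r_neq0 // scale1r mulmxDl mulmxBl (projmx_id yF).
by rewrite -/z -mulmxA projmx_idem addrC subrK.
Unshelve. all: by end_near.
Qed.

Lemma sum_proj_centred_contact_eq0 :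
  \sum_i (alpha i * (1 - dot (p i) z)) *: ((v i - z) *m P) = 0.
Proof.
have zP : z *m P = z by rewrite -mulmxA projmx_idem.
have sum_vP : \sum_i alpha i *: (v i *m P) = k *: z.
  rewrite /z /barycentre mulmx_suml scaler_sumr; apply: eq_bigr => i _.
  by rewrite -scalemxAl scalerA mulrCA mulfV ?mulr1 // lt0r_neq0.
have sum_pz_vP : \sum_i (alpha i * dot (p i) z) *: (v i *m P) = z.
  exact: sum_dot_tens_proj (projmx_sym F) PAP zP.
have sum_pz : \sum_i alpha i * dot (p i) z = 0.
  by rewrite -dot_suml sum_alpha_p dot0l.
under eq_bigr do rewrite mulmxBl zP mulrBr mulr1 scalerBr !scalerBl.
rewrite !sumrB sum_vP sum_pz_vP -!scaler_suml sum_alpha sum_pz scale0r subr0.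
by rewrite /k scalerDl scale1r addrK subrr.
Qed.

End Centre.

Theorem mainTheorem11 (R : realType) (d s m : nat) (K L : set 'rV[R]_d)
  (F : 'M[R]_d) (v p : 'I_m -> 'rV[R]_d) (alpha : 'I_m -> R) :
  convex_body K -> convex_body L -> K `<=` L -> interior K 0 ->
  \rank F = s ->
  (forall i, contact_pair K L (v i) (p i)) ->
  (forall i, 0 < alpha i) ->
  projmx F *m (\sum_(i < m) alpha i *: tens (p i) (v i)) *m projmx F = projmx F ->
  \sum_(i < m) alpha i *: p i = 0 ->
  \tr (\sum_(i < m) alpha i *: tens (p i) (v i)) = d%:R ->
  \sum_(i < m) alpha i = d%:R ->
  [set x *m projmx F | x in K] `<=` L `&` subsp F ->
  exists z : 'rV[R]_d, relint (L `&` subsp F) z /\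
  exists (v' p' : 'I_m -> 'rV[R]_d) (c : 'I_m -> R),
    (forall i, contact_pair (translate K z) (translate L z) (v' i) (p' i)) /\
    (forall i, 0 < c i) /\
    \sum_(i < m) c i *: tens (p' i) (v' i) = \sum_(i < m) alpha i *: tens (p i) (v i) /\
    \sum_(i < m) c i *: (v' i *m projmx F) = 0 /\
    \sum_(i < m) c i *: p' i = 0.
Proof.
move=> [K_compact [K_convex _]] _ _ K0 _ contact alpha_gt0 PAP sum_p _ sum_alpha PK_sub.
have K_closed := compact_closed (@norm_hausdorff R _) K_compact.
pose z := barycentre v alpha *m projmx F.
have pz_lt1 := dot_contact_proj_barycentre_lt1 K_closed contact alpha_gt0 sum_alpha PK_sub.
have rescale i (T : lmodType R) (x : T) :
    (alpha i * (1 - dot (p i) z)) *: ((1 - dot (p i) z)^-1 *: x) = alpha i *: x.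
  by rewrite scalerA mulfK // subr_eq0 eq_sym lt_eqF.
exists z; split.
  exact: proj_barycentre_relint K_convex K_closed K0 contact alpha_gt0 sum_alpha PK_sub.
exists (fun i => v i - z), (fun i => (1 - dot (p i) z)^-1 *: p i),
  (fun i => alpha i * (1 - dot (p i) z)).
split; first by move=> i; exact: contact_pair_translate.
split; first by move=> i; rewrite mulr_gt0 // subr_gt0.
split; first by under eq_bigr do rewrite tensZl rescale; exact: sum_tens_translate.
split; first exact: sum_proj_centred_contact_eq0 sum_alpha sum_p PAP.
by under eq_bigr do rewrite rescale.
Qed.
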